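(* Let $A \in \mathbb{R}^{m\times n}$ have rank $r \ge 1$ with condition number $\kappa_2(A) = \|A\|_2/\sigma_r$, $\sigma_r$ its smallest nonzero singular value. Let $\bar{b} \in \mathcal{R}(A)$, $\bar b\neq 0$ (i.e. $\bar{b}|_{\mathcal{R}(A)^\perp} = 0$), let $E_2 \in \mathbb{R}^{m\times n}$ and $\delta b \in \mathbb{R}^m$ be perturbations, and set $\tilde{A} = A$, $\tilde{B} = A^{\mathsf{T}} + E_2^{\mathsf{T}}$, $b = \bar{b} + \delta b$. Let $x_{\min} = A^{\dagger}\bar{b}$ and define $\delta x_{\min}$ by $x_{\min} + \delta x_{\min} = (\tilde{B}\tilde{A})^{\dagger}\tilde{B}\, b$. Assume $\tilde{B}$ is an acute perturbation of $A^{\mathsf{T}}$, i.e. $\| P_{\mathcal{R}(\tilde{B})} - P_{\mathcal{R}(A^{\mathsf{T}})} \|_2 < 1$ and $\| P_{\mathcal{R}(\tilde{B}^{\mathsf{T}})} - P_{\mathcal{R}(A)} \|_2 < 1$. Then, to first order in the perturbations $(E_2, \delta b)$ (neglecting terms of second and higher order), \[ \frac{\| \delta x_{\min} \|_2}{\| x_{\min} \|_2} \leq \kappa_2(A) \frac{\| \delta b|_{\mathcal{R}(A)} \|_2}{\| \bar{b} \|_2}. \]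
   Context: $\mathcal{R}(\cdot)$ denotes the range of a matrix, $P_{\mathcal{S}}$ the orthogonal projection onto a subspace $\mathcal{S}$, $v|_{\mathcal{S}}$ the orthogonal projection of a vector $v$ onto $\mathcal{S}$, and $\dagger$ the Moore–Penrose pseudoinverse. *)

From HB Require Import structures.
From mathcomp Require Import all_boot all_order all_algebra.
From mathcomp Require Import classical_sets reals.
From Stdlib Require Import ClassicalEpsilon.
Set Implicit Arguments. Unset Strict Implicit. Unset Printing Implicit Defensive.
Import Order.TTheory GRing.Theory Num.Theory.
Local Open Scope ring_scope.
Local Open Scope classical_set_scope.

Section Defs.
Variable R : realType.

Definition vnorm (k : nat) (v : 'cV[R]_k) : R :=
  Num.sqrt (\sum_(i < k) v i 0 ^+ 2).

Definition specnorm (p q : nat) (M : 'M[R]_(p, q)) : R :=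
  sup [set vnorm (M *m v) | v in [set v : 'cV[R]_q | vnorm v <= 1]].

Definition penrose (p q : nat) (M : 'M[R]_(p, q)) (X : 'M[R]_(q, p)) : Prop :=
  [/\ M *m X *m M = M, X *m M *m X = X,
      (M *m X)^T = M *m X & (X *m M)^T = X *m M].

Definition pinv (p q : nat) (M : 'M[R]_(p, q)) : 'M[R]_(q, p) :=
  epsilon (inhabits 0) (penrose M).

Definition in_range (p q : nat) (M : 'M[R]_(p, q)) (v : 'cV[R]_p) : Prop :=
  exists y : 'cV[R]_q, v = M *m y.

(* orthogonal projector onto R(M): the symmetric idempotent P whose column
   space equals the column space of M *)
Definition is_orth_proj_range (p q : nat) (M : 'M[R]_(p, q)) (P : 'M[R]_p) : Prop :=
  [/\ P *m P = P, P^T = P & (P^T == M^T)%MS].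

Definition proj_range (p q : nat) (M : 'M[R]_(p, q)) : 'M[R]_p :=
  epsilon (inhabits 0) (is_orth_proj_range M).

(* singular values = square roots of the eigenvalues of M^T M;
   smallest nonzero singular value sigma_r *)
Definition sigma_min_nz (p q : nat) (M : 'M[R]_(p, q)) : R :=
  Num.sqrt (inf [set l : R | 0 < l /\ eigenvalue (M^T *m M) l]).

Definition kappa2 (p q : nat) (M : 'M[R]_(p, q)) : R :=
  specnorm M / sigma_min_nz M.

End Defs.

(* With X = A^+, the matrix Q = X A is the orthogonal projector onto R(A^T), and
   sigma_r |w| <= |A w| for w in R(A^T): sigma_r^2 is the minimum mu of the Rayleigh
   quotient of A^T A on R(A^T), because that minimum is attained.  Indeed T = A^T A - mu
   is positive semidefinite on R(A^T) with infimum 0 there, and by Cauchy-Schwarz for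
   the form of T such a form is coercive unless it has a kernel vector in R(A^T).
   For Bt = A^T + E^T the matrix M = Bt A satisfies |M v| >= (sigma_r^2 - |E| |A|) |v|
   on R(A^T), which contains the range of M^+; hence M^+ M = X A on the whole space and
   |M^+| <= 1 / (sigma_r^2 - |E| |A|).  Writing P = A X for the projector onto R(A) and
   bbar = A y, the error is
     dx = X P db + M^+ E^T (I - P) db,
   whose first term is at most |P db| / sigma_r and whose second term is of order
   |E| |db|.  Dividing by |x| >= |bbar| / |A| gives the bound. *)

From HB Require Import structures.
From mathcomp Require Import all_boot all_order all_algebra.
From mathcomp Require Import classical_sets reals.
From mathcomp Require Import ring lra.
From Stdlib Require Import ClassicalEpsilon.
Set Implicit Arguments. Unset Strict Implicit. Unset Printing Implicit Defensive.
Import Order.TTheory GRing.Theory Num.Theory.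
Local Open Scope ring_scope.
Local Open Scope classical_set_scope.

Lemma ler_of_sqr_le_mul (R : realDomainType) (a c : R) :
  0 <= a -> 0 <= c -> a ^+ 2 <= c * a -> a <= c.
Proof.
rewrite le_eqVlt => /predU1P [<- //|a_gt0] _.
by rewrite expr2 ler_pM2r.
Qed.

Lemma relative_error_le (R : realFieldType) (s a nb nx ndx g h p e d : R) :
  0 < s -> 0 < nb -> 0 < nx -> 0 <= p -> 0 <= e -> 0 <= d ->
  ndx <= g + h -> s * g <= p -> s ^+ 2 / 2 * h <= e * d -> nb <= a * nx ->
  ndx / nx <= a / s * (p / nb) + 2 * a / (s ^+ 2 * nb) * (e + d) ^+ 2.
Proof.
move=> s_gt0 nb_gt0 nx_gt0 p_ge0 e_ge0 d_ge0 ndx_le g_le h_le nb_le.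
have a_gt0 : 0 < a by rewrite -(pmulr_lgt0 _ nx_gt0) (lt_le_trans nb_gt0).
set K := p / s + 2 / s ^+ 2 * (e * d).
have K_ge0 : 0 <= K.
  by rewrite addr_ge0 ?mulr_ge0 ?invr_ge0 ?exprn_ge0 ?(ltW s_gt0).
have s2_gt0 : 0 < s ^+ 2 / 2 by rewrite divr_gt0 ?exprn_gt0.
have ndx_K : ndx <= K.
  have g_le' : g <= p / s by rewrite ler_pdivlMr // mulrC.
  have h_le' : h <= 2 / s ^+ 2 * (e * d).
    by rewrite -[2 / _]invf_div ler_pdivlMl.
  rewrite /K; lra.
have inv_nx : nx^-1 <= a / nb by rewrite ler_pdivlMr // mulrC ler_pdivrMr.
have ed_le : e * d <= (e + d) ^+ 2 by nra.
have ndx_le_K : ndx / nx <= a / s * (p / nb) + 2 * a / (s ^+ 2 * nb) * (e * d).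
  have -> : a / s * (p / nb) + 2 * a / (s ^+ 2 * nb) * (e * d) = K * (a / nb).
    by rewrite /K; field; rewrite ?gt_eqF.
  rewrite (@le_trans _ _ (K / nx)) ?ler_wpM2l //.
  by rewrite ler_pM2r ?invr_gt0.
rewrite (le_trans ndx_le_K) // lerD2l ler_wpM2l //.
by rewrite divr_ge0 ?mulr_ge0 ?exprn_ge0 ?(ltW s_gt0) ?(ltW nb_gt0) ?(ltW a_gt0).
Qed.

Section Euclidean.
Variable R : realType.

Definition vdot k (u v : 'cV[R]_k) : R := (u^T *m v) 0 0.

Lemma vdotMl k l (M : 'M[R]_(k, l)) u v : vdot (M *m u) v = vdot u (M^T *m v).
Proof. by rewrite /vdot trmx_mul mulmxA. Qed.

Section Vdot.
Variable k : nat.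
Implicit Types u v w : 'cV[R]_k.

Lemma vdotE u v : vdot u v = \sum_i u i 0 * v i 0.
Proof. by rewrite /vdot mxE; apply: eq_bigr => i _; rewrite mxE. Qed.

Lemma vdotC u v : vdot u v = vdot v u.
Proof. by rewrite !vdotE; apply: eq_bigr => i _; rewrite mulrC. Qed.

Lemma vdotDr u v w : vdot u (v + w) = vdot u v + vdot u w.
Proof. by rewrite /vdot mulmxDr mxE. Qed.

Lemma vdotZr a u v : vdot u (a *: v) = a * vdot u v.
Proof. by rewrite /vdot -scalemxAr mxE. Qed.

Lemma vdotDl u v w : vdot (u + v) w = vdot u w + vdot v w.
Proof. by rewrite vdotC vdotDr !(vdotC w). Qed.

Lemma vdotZl a u v : vdot (a *: u) v = a * vdot u v.
Proof. by rewrite vdotC vdotZr vdotC. Qed.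

Lemma vdot0r u : vdot u 0 = 0.
Proof. by rewrite /vdot mulmx0 mxE. Qed.

Lemma vdotvv_ge0 u : 0 <= vdot u u.
Proof. by rewrite vdotE sumr_ge0 // => i _; rewrite -expr2 sqr_ge0. Qed.

Lemma vdotvv_eq0 u : (vdot u u == 0) = (u == 0).
Proof.
apply/idP/eqP => [|->]; last by rewrite vdot0r.
rewrite vdotE psumr_eq0 => [/allP u0|i _]; last by rewrite -expr2 sqr_ge0.
apply/matrixP => i j; rewrite (ord1 j) mxE.
by have /implyP/(_ isT) := u0 i (mem_index_enum i); rewrite -expr2 sqrf_eq0 => /eqP.
Qed.

Lemma vdotvv_gt0 u : (0 < vdot u u) = (u != 0).
Proof. by rewrite lt_def vdotvv_eq0 vdotvv_ge0 andbT. Qed.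

Lemma vnorm_sqr u : vnorm u ^+ 2 = vdot u u.
Proof.
rewrite /vnorm sqr_sqrtr; last by rewrite sumr_ge0 // => i _; rewrite sqr_ge0.
by rewrite vdotE; apply: eq_bigr => i _; rewrite expr2.
Qed.

Lemma vnormE u : vnorm u = Num.sqrt (vdot u u).
Proof. by rewrite -vnorm_sqr sqrtr_sqr ger0_norm // sqrtr_ge0. Qed.

Lemma vnorm_ge0 u : 0 <= vnorm u.
Proof. exact: sqrtr_ge0. Qed.

Lemma vnorm0 : vnorm (0 : 'cV[R]_k) = 0.
Proof. by rewrite vnormE vdot0r sqrtr0. Qed.

Lemma vnorm_eq0 u : (vnorm u == 0) = (u == 0).
Proof. by rewrite -sqrf_eq0 vnorm_sqr vdotvv_eq0. Qed.

Lemma vnorm_gt0 u : (0 < vnorm u) = (u != 0).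
Proof. by rewrite lt_def vnorm_eq0 vnorm_ge0 andbT. Qed.

Lemma vnormZ a u : vnorm (a *: u) = `|a| * vnorm u.
Proof.
by rewrite !vnormE vdotZl vdotZr mulrA -expr2 sqrtrM ?sqr_ge0 // sqrtr_sqr.
Qed.

Lemma vnormN u : vnorm (- u) = vnorm u.
Proof. by rewrite -scaleN1r vnormZ normrN normr1 mul1r. Qed.

Lemma vnorm_normalize u : u != 0 -> vnorm ((vnorm u)^-1 *: u) = 1.
Proof.
by rewrite -vnorm_gt0 => u_gt0; rewrite vnormZ ger0_norm ?invr_ge0 ?mulVf ?gt_eqF ?ltW.
Qed.

Lemma vdot_normalize u : u != 0 -> vdot ((vnorm u)^-1 *: u) ((vnorm u)^-1 *: u) = 1.
Proof. by move=> u_neq0; rewrite -vnorm_sqr vnorm_normalize ?expr1n. Qed.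

Lemma discriminant_le0 (a b c : R) : 0 <= c ->
  (forall t, 0 <= a + 2 * b * t + c * t ^+ 2) -> b ^+ 2 <= a * c.
Proof.
move=> c_ge0; have [->|c_neq0] := eqVneq c 0 => pos.
  have [->|b_neq0] := eqVneq b 0; first by rewrite expr0n mulr0.
  have := pos (- (a + 1) / (2 * b)).
  have -> : 2 * b * (- (a + 1) / (2 * b)) = - (a + 1) by field.
  rewrite mul0r; lra.
have := pos (- b / c); rewrite -subr_ge0.
have -> : a + 2 * b * (- b / c) + c * (- b / c) ^+ 2 - 0 = (a * c - b ^+ 2) / c.
  by field.
by rewrite pmulr_lge0 ?invr_gt0 ?lt_def ?c_neq0 // subr_ge0.
Qed.

Lemma psd_cauchy_schwarz (T : 'M[R]_k) u v : T^T = T ->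
  0 <= vdot v (T *m v) ->
  (forall t, 0 <= vdot (u + t *: v) (T *m (u + t *: v))) ->
  vdot u (T *m v) ^+ 2 <= vdot u (T *m u) * vdot v (T *m v).
Proof.
move=> T_sym v_psd psd; apply: discriminant_le0 => // t.
have Tsym : vdot v (T *m u) = vdot u (T *m v) by rewrite vdotC vdotMl T_sym.
have := psd t; rewrite mulmxDr -scalemxAr !vdotDl !vdotDr !vdotZl !vdotZr Tsym.
by congr (_ <= _); ring.
Qed.

Lemma cauchy_schwarz_sqr u v : vdot u v ^+ 2 <= vdot u u * vdot v v.
Proof.
have := @psd_cauchy_schwarz 1%:M u v (trmx1 _ _); rewrite !mul1mx.
by apply; [exact: vdotvv_ge0 | move=> t; rewrite mul1mx vdotvv_ge0].
Qed.

Lemma cauchy_schwarz u v : vdot u v <= vnorm u * vnorm v.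
Proof.
rewrite !vnormE -sqrtrM ?vdotvv_ge0 // (le_trans (ler_norm _)) //.
by rewrite -sqrtr_sqr ler_wsqrtr ?cauchy_schwarz_sqr.
Qed.

Lemma vnormD u v : vnorm (u + v) <= vnorm u + vnorm v.
Proof.
rewrite -(ler_pXn2r (_ : (0 < 2)%N)) ?nnegrE ?addr_ge0 ?vnorm_ge0 //.
rewrite sqrrD !vnorm_sqr vdotDl !vdotDr (vdotC v u).
have := cauchy_schwarz u v; lra.
Qed.

Lemma vnorm_proj_le (P : 'M[R]_k) u : P^T = P -> P *m P = P -> vnorm (P *m u) <= vnorm u.
Proof.
move=> P_sym P_idem; apply: ler_of_sqr_le_mul; rewrite ?vnorm_ge0 //.
by rewrite vnorm_sqr vdotMl P_sym mulmxA P_idem cauchy_schwarz.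
Qed.

Lemma vnorm_sub_proj_le (P : 'M[R]_k) u :
  P^T = P -> P *m P = P -> vnorm (u - P *m u) <= vnorm u.
Proof.
move=> P_sym P_idem; rewrite -[u in u - _]mul1mx -mulmxBl vnorm_proj_le //.
  by rewrite linearB /= trmx1 P_sym.
by rewrite mulmxBl !mulmxBr !mul1mx mulmx1 P_idem subrr subr0.
Qed.

End Vdot.

Section SpectralNorm.
Variables p q : nat.
Implicit Types M : 'M[R]_(p, q).

Lemma vnormM_bounded M : exists K, 0 <= K /\ forall x, vnorm (M *m x) <= K * vnorm x.
Proof.
pose r i := (row i M)^T.
exists (Num.sqrt (\sum_i vdot (r i) (r i))); split => [|x]; first exact: sqrtr_ge0.
rewrite !vnormE -sqrtrM ?sumr_ge0 // => [|i _]; last exact: vdotvv_ge0.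
rewrite ler_wsqrtr // vdotE mulr_suml ler_sum // => i _.
have -> : (M *m x) i 0 = vdot (r i) x.
  by rewrite mxE vdotE; apply: eq_bigr => j _; rewrite !mxE.
by rewrite -expr2 cauchy_schwarz_sqr.
Qed.

Let unit_ball_image M := [set vnorm (M *m v) | v in [set v : 'cV[R]_q | vnorm v <= 1]].

Let unit_ball_image0 M : unit_ball_image M 0.
Proof. by exists 0; rewrite /= ?mulmx0 vnorm0 ?ler01. Qed.

Let unit_ball_image_has_sup M : has_sup (unit_ball_image M).
Proof.
split; first by exists 0; exact: unit_ball_image0.
have [K [K_ge0 MK]] := vnormM_bounded M; exists K => _ [v /= v_le1 <-].
by rewrite (le_trans (MK v)) // ler_piMr.
Qed.

Lemma specnorm_ge0 M : 0 <= specnorm M.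
Proof. exact: sup_upper_bound (unit_ball_image_has_sup M) _ (unit_ball_image0 M). Qed.

Lemma vnormM_le M x : vnorm (M *m x) <= specnorm M * vnorm x.
Proof.
have [->|x_neq0] := eqVneq x 0; first by rewrite mulmx0 !vnorm0 mulr0.
have x_gt0 : 0 < vnorm x by rewrite vnorm_gt0.
have : unit_ball_image M (vnorm (M *m ((vnorm x)^-1 *: x))).
  by exists ((vnorm x)^-1 *: x); rewrite //= vnorm_normalize.
move=> /(sup_upper_bound (unit_ball_image_has_sup M)).
rewrite -scalemxAr vnormZ ger0_norm ?invr_ge0 ?vnorm_ge0 // -(ler_pM2l x_gt0).
by rewrite mulrA mulfV ?gt_eqF // mul1r mulrC.
Qed.

Lemma vnorm_trmxM_le M x : vnorm (M^T *m x) <= specnorm M * vnorm x.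
Proof.
apply: ler_of_sqr_le_mul; rewrite ?vnorm_ge0 ?mulr_ge0 ?specnorm_ge0 ?vnorm_ge0 //.
rewrite vnorm_sqr vdotMl trmxK (le_trans (cauchy_schwarz _ _)) //.
by rewrite -mulrA mulrCA ler_wpM2l ?vnorm_ge0 ?vnormM_le.
Qed.

Lemma specnorm_gt0 M : M != 0 -> 0 < specnorm M.
Proof.
rewrite -trmx_eq0 => /rowV0Pn [_ /submxP [D ->]].
rewrite -trmx_eq0 trmx_mul trmxK -vnorm_gt0 => MD_gt0.
have D_neq0 : D^T != 0 by apply: contraTneq MD_gt0 => ->; rewrite mulmx0 vnorm0 ltxx.
by have := lt_le_trans MD_gt0 (vnormM_le M D^T); rewrite pmulr_lgt0 ?vnorm_gt0.
Qed.

End SpectralNorm.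

Lemma nonunitmx_ker k (M : 'M[R]_k) :
  M \notin unitmx -> exists2 x : 'cV[R]_k, x != 0 & M *m x = 0.
Proof.
rewrite -unitmx_tr -row_free_unit -kermx_eq0 => /rowV0Pn [v].
rewrite sub_kermx => /eqP vM v_neq0; exists v^T; first by rewrite trmx_eq0.
by rewrite -[M]trmxK -trmx_mul vM trmx0.
Qed.

Lemma unitmx_ker0 k (M : 'M[R]_k) :
  (forall x : 'cV[R]_k, M *m x = 0 -> x = 0) -> M \in unitmx.
Proof.
move=> M_inj; apply: contraT => /nonunitmx_ker [x x_neq0 /M_inj x0].
by rewrite x0 eqxx in x_neq0.
Qed.

Lemma gram_unitmx k l (G : 'M[R]_(k, l)) : row_free G -> G *m G^T \in unitmx.
Proof.
move=> G_free; apply: unitmx_ker0 => x GGx0.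
have : vdot (G^T *m x) (G^T *m x) == 0 by rewrite vdotMl trmxK mulmxA GGx0 vdot0r.
rewrite vdotvv_eq0 -trmx_eq0 trmx_mul trmxK => /eqP xG0.
by apply: trmx_inj; apply: (row_free_inj G_free); rewrite /= xG0 trmx0 mul0mx.
Qed.

Section Pseudoinverse.
Variables p q : nat.
Implicit Types M : 'M[R]_(p, q).

Lemma penrose_factorization r (F : 'M[R]_(p, r)) (G : 'M[R]_(r, q)) :
  row_free F^T -> row_free G ->
  penrose (F *m G) (G^T *m invmx (G *m G^T) *m invmx (F^T *m F) *m F^T).
Proof.
move=> /gram_unitmx; rewrite trmxK => FF_unit /gram_unitmx GG_unit.
have FF_sym : (F^T *m F)^T = F^T *m F by rewrite trmx_mul trmxK.
have GG_sym : (G *m G^T)^T = G *m G^T by rewrite trmx_mul trmxK.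
set GG := G *m G^T in GG_unit GG_sym *; set FF := F^T *m F in FF_unit FF_sym *.
have GGK : F *m G *m G^T *m invmx GG = F by rewrite -(mulmxA F) -mulmxA mulmxV ?mulmx1.
have MX : F *m G *m (G^T *m invmx GG *m invmx FF *m F^T) = F *m invmx FF *m F^T.
  by rewrite !mulmxA GGK.
have XM : G^T *m invmx GG *m invmx FF *m F^T *m (F *m G) = G^T *m invmx GG *m G.
  rewrite !mulmxA -(mulmxA (G^T *m invmx GG *m invmx FF) F^T F).
  by rewrite -(mulmxA (G^T *m invmx GG)) mulVmx ?mulmx1.
split.
- by rewrite -mulmxA XM !mulmxA GGK.
- rewrite XM !mulmxA -(mulmxA (G^T *m invmx GG) G G^T).
  by rewrite -(mulmxA G^T) mulVmx ?mulmx1.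
- by rewrite MX !trmx_mul trmxK trmx_inv FF_sym !mulmxA.
- by rewrite XM !trmx_mul trmxK trmx_inv GG_sym !mulmxA.
Qed.

Lemma pinvP M : penrose M (pinv M).
Proof.
apply: epsilon_spec; rewrite -{1}(mulmx_base M).
eexists; apply: penrose_factorization; last exact: row_base_free.
by rewrite /row_free mxrank_tr; exact: col_base_full.
Qed.

Section PinvProps.
Variable M : 'M[R]_(p, q).
Local Notation X := (pinv M).

Lemma mulmx_pinvK : M *m X *m M = M.
Proof. by case: (pinvP M). Qed.

Lemma pinv_mulmxK : X *m M *m X = X.
Proof. by case: (pinvP M). Qed.

Lemma mulmx_pinv_sym : (M *m X)^T = M *m X.
Proof. by case: (pinvP M). Qed.

Lemma pinv_mulmx_sym : (X *m M)^T = X *m M.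
Proof. by case: (pinvP M). Qed.

Lemma trmx_mulmx_pinv : M^T *m (M *m X) = M^T.
Proof. by rewrite -mulmx_pinv_sym -trmx_mul mulmx_pinvK. Qed.

Lemma pinv_mulmx_idem : X *m M *m (X *m M) = X *m M.
Proof. by rewrite mulmxA pinv_mulmxK. Qed.

Lemma pinv_mulmx_trmx : X *m M *m M^T = M^T.
Proof. by rewrite -pinv_mulmx_sym -trmx_mul mulmxA mulmx_pinvK. Qed.

Lemma pinv_eq_trmx_mul : X = M^T *m (X^T *m X).
Proof. by rewrite mulmxA -trmx_mul pinv_mulmx_sym pinv_mulmxK. Qed.

End PinvProps.

Lemma proj_rangeE M : proj_range M = M *m pinv M.
Proof.
have MX_proj : is_orth_proj_range M (M *m pinv M).
  split; [by rewrite mulmxA mulmx_pinvK | exact: mulmx_pinv_sym |].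
  rewrite mulmx_pinv_sym; apply/andP; split.
    by rewrite -mulmx_pinv_sym trmx_mul submxMl.
  by rewrite -{1}(mulmx_pinvK M) trmx_mul mulmx_pinv_sym submxMl.
have := @epsilon_spec _ (inhabits 0) _ (ex_intro _ _ MX_proj).
rewrite -/(proj_range M); set P := proj_range M.
case=> P_idem P_sym /andP [/submxP [D PD] /submxP [D' MD']].
have MP : M = P *m D'^T by rewrite -[LHS]trmxK MD' trmx_mul trmxK.
have PM : P = M *m D^T by rewrite -[LHS]trmxK PD trmx_mul trmxK.
have P_MX : P *m (M *m pinv M) = M *m pinv M by rewrite mulmxA {1}MP mulmxA P_idem -MP.
have MX_P : M *m pinv M *m P = P by rewrite {1}PM mulmxA mulmx_pinvK -PM.
by rewrite -P_sym -MX_P trmx_mul P_sym mulmx_pinv_sym P_MX.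
Qed.

End Pseudoinverse.

Section PsdForm.
Variables (k : nat) (T Q : 'M[R]_k).
Hypotheses (T_sym : T^T = T) (Q_idem : Q *m Q = Q) (QT_comm : Q *m T = T *m Q).
Hypothesis T_psd : forall w, Q *m w = w -> 0 <= vdot w (T *m w).

(* T' acts as T on the fixed space of Q and as the identity on the kernel of Q,
   so it is singular exactly when T has a nonzero kernel vector fixed by Q. *)
Local Notation T' := (T *m Q + (1%:M - Q)).

Lemma psd_form_coercive : T' \in unitmx -> forall w, Q *m w = w ->
  vdot w w <= specnorm (invmx T') ^+ 2 * specnorm T * vdot w (T *m w).
Proof.
move=> T'_unit w Qw.
have QTw : Q *m (T *m w) = T *m w by rewrite mulmxA QT_comm -mulmxA Qw.
have T'w : T' *m w = T *m w by rewrite mulmxDl mulmxBl mul1mx -mulmxA Qw subrr addr0.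
set N := vdot (T *m w) (T *m w).
have N_le : N <= vdot w (T *m w) * specnorm T.
  have psd_line t : 0 <= vdot (w + t *: (T *m w)) (T *m (w + t *: (T *m w))).
    by apply: T_psd; rewrite mulmxDr -scalemxAr Qw QTw.
  have := @psd_cauchy_schwarz _ T w (T *m w) T_sym (T_psd QTw) psd_line.
  have -> : vdot w (T *m (T *m w)) = N by rewrite vdotC vdotMl T_sym.
  move=> N2_le.
  apply: ler_of_sqr_le_mul; rewrite ?vdotvv_ge0 ?mulr_ge0 ?T_psd ?specnorm_ge0 //.
  rewrite (le_trans N2_le) // -mulrA ler_wpM2l ?T_psd //.
  rewrite (le_trans (cauchy_schwarz _ _)) // /N -vnorm_sqr expr2 mulrCA.
  by rewrite ler_wpM2l ?vnorm_ge0 // vnormM_le.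
have w_le : vdot w w <= specnorm (invmx T') ^+ 2 * N.
  rewrite -vnorm_sqr /N -vnorm_sqr -exprMn.
  rewrite ler_pXn2r ?nnegrE ?mulr_ge0 ?vnorm_ge0 ?specnorm_ge0 //.
  by rewrite -T'w -{1}(mulKmx T'_unit w) vnormM_le.
rewrite (le_trans w_le) // -mulrA ler_wpM2l ?sqr_ge0 // mulrC; exact: N_le.
Qed.

Lemma psd_form_kernel :
  T' \notin unitmx -> exists2 x : 'cV[R]_k, x != 0 & Q *m x = x /\ T *m x = 0.
Proof.
move=> /nonunitmx_ker [x x_neq0 T'x0].
have TQx0 : T *m (Q *m x) = 0.
  have := congr1 (mulmx Q) T'x0.
  rewrite mulmx0 mulmxDl mulmxBl mul1mx mulmxDr mulmxBr !mulmxA Q_idem subrr addr0.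
  by rewrite QT_comm -(mulmxA T) Q_idem -mulmxA.
have Qx : Q *m x = x.
  by apply/eqP; rewrite eq_sym -subr_eq0 -T'x0 mulmxDl mulmxBl mul1mx -mulmxA TQx0 add0r.
by exists x => //; split; last rewrite -Qx.
Qed.

Lemma psd_form_inf0_kernel :
  (forall d, 0 < d ->
     exists w : 'cV[R]_k, [/\ Q *m w = w, vdot w w = 1 & vdot w (T *m w) < d]) ->
  exists2 x : 'cV[R]_k, x != 0 & Q *m x = x /\ T *m x = 0.
Proof.
move=> small; have [T'_unit|] := boolP (T' \in unitmx); last exact: psd_form_kernel.
set K := specnorm (invmx T') ^+ 2 * specnorm T.
have K_ge0 : 0 <= K by rewrite mulr_ge0 ?sqr_ge0 ?specnorm_ge0.
have K1_gt0 : 0 < K + 1 by rewrite ltr_wpDl.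
have := small (K + 1)^-1; rewrite invr_gt0 => /(_ K1_gt0) [w [Qw w1]].
rewrite -[(K + 1)^-1]mul1r ltr_pdivlMr //.
have := psd_form_coercive T'_unit Qw; rewrite w1 -/K.
have := T_psd Qw; lra.
Qed.

End PsdForm.

Section Rayleigh.
Variables (m n : nat) (A : 'M[R]_(m, n)).
(* Q is the orthogonal projector onto R(A^T), so [Q *m w = w] means w \in R(A^T). *)
Local Notation Q := (pinv A *m A).

Definition rayleigh_min : R :=
  inf [set vdot (A *m w) (A *m w) | w in [set w | Q *m w = w /\ vdot w w = 1]].

Lemma rayleigh_min_le w : Q *m w = w -> rayleigh_min * vdot w w <= vdot (A *m w) (A *m w).
Proof.
move=> Qw; have [->|w_neq0] := eqVneq w 0; first by rewrite mulmx0 !vdot0r mulr0.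
set u := (vnorm w)^-1 *: w.
have : rayleigh_min <= vdot (A *m u) (A *m u).
  apply: ge_inf; first by exists 0 => _ [v _ <-]; exact: vdotvv_ge0.
  by exists u => //; split; rewrite /u ?vdot_normalize // -scalemxAr Qw.
rewrite -scalemxAr vdotZl vdotZr mulrA -expr2 exprVn vnorm_sqr => mu_le.
have := ler_wpM2r (vdotvv_ge0 w) mu_le.
by rewrite mulrAC mulVf ?mul1r // vdotvv_eq0.
Qed.

Lemma pinv_mulmx_fixed_eq0 (w : 'cV[R]_n) : Q *m w = w -> A *m w = 0 -> w = 0.
Proof. by move=> Qw Aw0; rewrite -Qw -mulmxA Aw0 mulmx0. Qed.

Lemma rayleigh_min_eigen : A != 0 ->
  exists2 x : 'cV[R]_n, x != 0 & Q *m x = x /\ A^T *m A *m x = rayleigh_min *: x.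
Proof.
move=> A_neq0; set mu := rayleigh_min; set T := A^T *m A - mu%:M.
have T_sym : T^T = T by rewrite /T linearB /= trmx_mul trmxK tr_scalar_mx.
have QT_comm : Q *m T = T *m Q.
  rewrite /T mulmxBr mulmxBl mul_mx_scalar mul_scalar_mx !mulmxA pinv_mulmx_trmx.
  by rewrite -!mulmxA (mulmxA A) mulmx_pinvK.
have wTw (w : 'cV[R]_n) : vdot w (T *m w) = vdot (A *m w) (A *m w) - mu * vdot w w.
  by rewrite /T mulmxBl mul_scalar_mx -scaleNr vdotDr vdotZr mulNr -mulmxA -vdotMl.
have unit_fixed : exists w : 'cV[R]_n, Q *m w = w /\ vdot w w = 1.
  have /rowV0Pn [_ /submxP [D ->] DA_neq0] := A_neq0.
  have w_neq0 : A^T *m D^T != 0 by rewrite -trmx_mul trmx_eq0.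
  exists ((vnorm (A^T *m D^T))^-1 *: (A^T *m D^T)).
  by rewrite -scalemxAr mulmxA pinv_mulmx_trmx vdot_normalize.
have T_psd w : Q *m w = w -> 0 <= vdot w (T *m w).
  by move=> Qw; rewrite wTw subr_ge0 rayleigh_min_le.
have T_small d : 0 < d ->
    exists w, [/\ Q *m w = w, vdot w w = 1 & vdot w (T *m w) < d].
  move=> d_gt0; have [w0 [Qw0 w01]] := unit_fixed.
  have [_ [w [Qw w1] <-]] : exists2 y, [set vdot (A *m w) (A *m w) | w in
      [set w | Q *m w = w /\ vdot w w = 1]] y & y < mu + d.
    by apply: inf_lt; [exists (vdot (A *m w0) (A *m w0)); exists w0 | rewrite ltrDl].
  by exists w; rewrite wTw w1 mulr1 ltrBlDl.
have [x x_neq0 [Qx Tx0]] :=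
  psd_form_inf0_kernel T_sym (pinv_mulmx_idem A) QT_comm T_psd T_small.
exists x => //; split => //; apply/eqP.
by rewrite -subr_eq0 -mul_scalar_mx -mulmxBl Tx0.
Qed.

Lemma rayleigh_min_gt0 : A != 0 -> 0 < rayleigh_min.
Proof.
move=> /rayleigh_min_eigen [x x_neq0 [Qx Sx]].
have Ax_neq0 : A *m x != 0 by apply: contra_neq x_neq0; exact: pinv_mulmx_fixed_eq0.
move: Ax_neq0; rewrite -vdotvv_gt0 vdotMl mulmxA Sx vdotZr.
by rewrite pmulr_lgt0 // vdotvv_gt0.
Qed.

Lemma sigma_min_nz_sqr : A != 0 -> sigma_min_nz A ^+ 2 = rayleigh_min.
Proof.
move=> A_neq0; have mu_gt0 := rayleigh_min_gt0 A_neq0.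
rewrite /sigma_min_nz; set L := [set l | _].
suff -> : inf L = rayleigh_min by rewrite sqr_sqrtr ?ltW.
have [x x_neq0 [_ Sx]] := rayleigh_min_eigen A_neq0.
have L_mu : L rayleigh_min.
  split => //; apply/eigenvalueP; exists x^T; last by rewrite trmx_eq0.
  by rewrite -[A^T *m A]trmxK trmx_mul trmxK -trmx_mul Sx linearZ.
apply/eqP; rewrite eq_le (ge_inf _ L_mu) ?andbT; last by exists 0 => l [/ltW].
apply: lb_le_inf; first by exists rayleigh_min.
move=> l [l_gt0 /eigenvalueP [v vS v_neq0]].
have Sv : A^T *m A *m v^T = l *: v^T.
  by rewrite -[A^T *m A]trmxK trmx_mul trmxK -trmx_mul vS linearZ.
have Qv : pinv A *m A *m v^T = v^T.
  rewrite -[v^T](scalerK (lt0r_neq0 l_gt0)) -Sv -!scalemxAr.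
  by rewrite !mulmxA pinv_mulmx_trmx.
have := rayleigh_min_le Qv; rewrite vdotMl mulmxA Sv vdotZr.
by rewrite ler_pM2r // vdotvv_gt0 trmx_eq0.
Qed.

Lemma sigma_min_nz_ge0 : 0 <= sigma_min_nz A.
Proof. exact: sqrtr_ge0. Qed.

Lemma sigma_min_nz_gt0 : A != 0 -> 0 < sigma_min_nz A.
Proof.
move=> A_neq0; rewrite lt_def sigma_min_nz_ge0 andbT -sqrf_eq0.
by rewrite sigma_min_nz_sqr // gt_eqF // rayleigh_min_gt0.
Qed.

Lemma sigma_min_nz_le w : Q *m w = w -> sigma_min_nz A * vnorm w <= vnorm (A *m w).
Proof.
move=> Qw; have [A0|A_neq0] := eqVneq A 0.
  by move: Qw; rewrite A0 mulmx0 mul0mx => <-; rewrite vnorm0 mulr0 vnorm_ge0.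
rewrite -(ler_pXn2r (_ : 0 < 2)%N) ?nnegrE ?mulr_ge0 ?vnorm_ge0 ?sigma_min_nz_ge0 //.
by rewrite exprMn !vnorm_sqr sigma_min_nz_sqr // rayleigh_min_le.
Qed.

End Rayleigh.

Section PerturbedNormal.
Variables (m n : nat) (A E : 'M[R]_(m, n)).
Local Notation X := (pinv A).
Local Notation Q := (pinv A *m A).
Local Notation M := ((A^T + E^T) *m A).
Local Notation Y := (pinv M).
Local Notation c := (sigma_min_nz A ^+ 2 - specnorm E * specnorm A).

Lemma perturbed_normal_lb v : Q *m v = v -> c * vnorm v <= vnorm (M *m v).
Proof.
move=> Qv; have [->|v_neq0] := eqVneq v 0; first by rewrite mulmx0 !vnorm0 mulr0.
have normal_lb : sigma_min_nz A ^+ 2 * vnorm v <= vnorm (A^T *m (A *m v)).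
  rewrite -(ler_pM2r (_ : 0 < vnorm v)) ?vnorm_gt0 // mulrAC -mulrA -expr2 -exprMn.
  rewrite [leRHS]mulrC (le_trans _ (cauchy_schwarz v _)) // -vdotMl -vnorm_sqr.
  by rewrite ler_pXn2r ?nnegrE ?mulr_ge0 ?vnorm_ge0 ?sigma_min_nz_ge0 ?sigma_min_nz_le.
have ET_le : vnorm (E^T *m (A *m v)) <= specnorm E * (specnorm A * vnorm v).
  by rewrite (le_trans (vnorm_trmxM_le _ _)) // ler_wpM2l ?specnorm_ge0 ?vnormM_le.
have : vnorm (A^T *m (A *m v)) <= vnorm (M *m v) + vnorm (E^T *m (A *m v)).
  rewrite -[A^T *m _](addrK (E^T *m (A *m v))) -mulmxDl -mulmxA.
  by rewrite (le_trans (vnormD _ _)) ?vnormN.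
rewrite mulrBl; lra.
Qed.

Lemma pinv_perturbed_normal_fixed (w : 'cV[R]_n) : Q *m (Y *m w) = Y *m w.
Proof. by rewrite (pinv_eq_trmx_mul M) trmx_mul !mulmxA pinv_mulmx_trmx. Qed.

Lemma pinv_perturbed_normal_le (w : 'cV[R]_n) : c * vnorm (Y *m w) <= vnorm w.
Proof.
rewrite (le_trans (perturbed_normal_lb (pinv_perturbed_normal_fixed w))) //.
by rewrite mulmxA vnorm_proj_le ?mulmx_pinv_sym // mulmxA mulmx_pinvK.
Qed.

Hypothesis E_small : specnorm E * specnorm A < sigma_min_nz A ^+ 2.

Lemma pinv_perturbed_normal_mul (z : 'cV[R]_n) : Y *m (M *m z) = X *m (A *m z).
Proof.
set u := X *m (A *m z).
have Mu : M *m u = M *m z.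
  by rewrite /u -!mulmxA (mulmxA A) (mulmxA (A *m X)) mulmx_pinvK.
have Qu : Q *m u = u by rewrite /u !mulmxA pinv_mulmxK.
clearbody u.
set v := u - Y *m (M *m u).
have Qv : Q *m v = v by rewrite /v mulmxBr Qu pinv_perturbed_normal_fixed.
have Mv : M *m v = 0.
  by rewrite /v mulmxBr (mulmxA M) (mulmxA (M *m Y)) mulmx_pinvK subrr.
have := perturbed_normal_lb Qv; rewrite Mv vnorm0 pmulr_rle0 ?subr_gt0 //.
rewrite le_eqVlt ltNge vnorm_ge0 orbF vnorm_eq0 subr_eq0 => /eqP.
by rewrite -Mu => <-.
Qed.

Lemma perturbed_solution_error (bbar db : 'cV[R]_m) : in_range A bbar ->
  Y *m (A^T + E^T) *m (bbar + db) - X *m bbar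
    = X *m (A *m X *m db) + Y *m (E^T *m (db - A *m X *m db)).
Proof.
move=> [y ->]; set r := db - A *m X *m db.
have YBA (z : 'cV[R]_n) : Y *m (A^T + E^T) *m (A *m z) = X *m (A *m z).
  by rewrite -mulmxA (mulmxA _ A) pinv_perturbed_normal_mul.
have Br : (A^T + E^T) *m r = E^T *m r.
  by rewrite mulmxDl /r mulmxBr (mulmxA A^T (A *m X)) trmx_mulmx_pinv subrr add0r.
have -> : A *m y + db = A *m (y + X *m db) + r.
  by rewrite /r mulmxDr mulmxA -addrA [_ + (db - _)]addrC subrK.
rewrite mulmxDr YBA -(mulmxA Y) Br mulmxDr mulmxDr (mulmxA A X).
by rewrite addrC -addrA addKr.
Qed.

End PerturbedNormal.

Lemma perturbed_relative_error_le m n (A E : 'M[R]_(m, n)) (bbar db : 'cV[R]_m) :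
  in_range A bbar -> bbar != 0 -> specnorm E * specnorm A <= sigma_min_nz A ^+ 2 / 2 ->
  vnorm (pinv ((A^T + E^T) *m A) *m (A^T + E^T) *m (bbar + db) - pinv A *m bbar)
      / vnorm (pinv A *m bbar)
    <= kappa2 A * (vnorm (proj_range A *m db) / vnorm bbar)
       + 2 * specnorm A / (sigma_min_nz A ^+ 2 * vnorm bbar) * (specnorm E + vnorm db) ^+ 2.
Proof.
move=> bbar_range bbar_neq0 E_le.
set s := sigma_min_nz A in E_le *; set X := pinv A; set P := A *m X.
have Ax : A *m (X *m bbar) = bbar.
  by case: bbar_range => y ->; rewrite mulmxA mulmxA mulmx_pinvK.
have x_neq0 : X *m bbar != 0 by apply: contra_neq bbar_neq0 => x0; rewrite -Ax x0 mulmx0.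
have A_neq0 : A != 0 by apply: contra_neq bbar_neq0 => A0; rewrite -Ax A0 mul0mx.
have s_gt0 : 0 < s := sigma_min_nz_gt0 A_neq0.
have E_lt : specnorm E * specnorm A < s ^+ 2.
  by have := exprn_gt0 2 s_gt0; lra.
rewrite perturbed_solution_error // /kappa2 proj_rangeE -/X -/P.
apply: (relative_error_le s_gt0 _ _ (vnorm_ge0 _) (specnorm_ge0 E) (vnorm_ge0 db)
  (vnormD _ _)); rewrite ?vnorm_gt0 //.
- rewrite (le_trans (sigma_min_nz_le _)) ?mulmxA ?pinv_mulmxK //.
  by rewrite mulmx_pinvK.
- have c_ge : s ^+ 2 / 2 <= s ^+ 2 - specnorm E * specnorm A by lra.
  rewrite (le_trans (ler_wpM2r (vnorm_ge0 _) c_ge)) //.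
  rewrite (le_trans (pinv_perturbed_normal_le _ _ _)) //.
  rewrite (le_trans (vnorm_trmxM_le _ _)) // ler_wpM2l ?specnorm_ge0 //.
  by rewrite vnorm_sub_proj_le ?mulmx_pinv_sym // mulmxA mulmx_pinvK.
- by rewrite -{1}Ax vnormM_le.
Qed.

End Euclidean.

Local Close Scope classical_set_scope.
Unset Implicit Arguments.

Theorem corollary1 (R : realType) (m n : nat) (A : 'M[R]_(m, n))
    (bbar : 'cV[R]_m) :
  (1 <= \rank A)%N ->
  in_range A bbar ->
  bbar != 0 ->
  exists C eps : R, 0 < C /\ 0 < eps /\
    forall (E2 : 'M[R]_(m, n)) (db : 'cV[R]_m),
      let At := A in
      let Bt := A^T + E2^T in
      let b := bbar + db in
      let xmin := pinv A *m bbar in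
      let dxmin := pinv (Bt *m At) *m Bt *m b - xmin in
      specnorm E2 + vnorm db <= eps ->
      specnorm (proj_range Bt - proj_range A^T) < 1 ->
      specnorm (proj_range Bt^T - proj_range A) < 1 ->
      vnorm dxmin / vnorm xmin <=
        kappa2 A * (vnorm (proj_range A *m db) / vnorm bbar)
        + C * (specnorm E2 + vnorm db) ^+ 2.
Proof.
move=> rank_gt0 bbar_range bbar_neq0.
have A_neq0 : A != 0 by rewrite -mxrank_eq0 -lt0n.
set s := sigma_min_nz A; set a := specnorm A.
have s_gt0 : 0 < s := sigma_min_nz_gt0 A_neq0.
have a_gt0 : 0 < a := specnorm_gt0 A_neq0.
exists (2 * a / (s ^+ 2 * vnorm bbar)), (s ^+ 2 / (2 * a)).
split; first by rewrite divr_gt0 ?mulr_gt0 ?vnorm_gt0.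
split; first by rewrite divr_gt0 ?mulr_gt0.
move=> E db At Bt b xmin dxmin small _ _.
apply: perturbed_relative_error_le => //.
have E_le : specnorm E <= s ^+ 2 / (2 * a).
  by apply: le_trans small; rewrite lerDl vnorm_ge0.
have -> : s ^+ 2 / 2 = s ^+ 2 / (2 * a) * a by field; rewrite gt_eqF.
by rewrite ler_pM2r.
Qed.
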